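(* Let $1\le k<n$ and let $V=\bigoplus_{i=1}^{2n-1}V_i$, $W=\bigoplus_{i=1}^{2n-1}W_i$ be graded complex vector spaces with $\dim V_i=\dim V_{2n-i}$, $W_i=0$ for $i\notin\{k,2n-k\}$, $W_k=W_{2n-k}$ one-dimensional, and satisfying the nonemptiness condition below. Then for every $(B_{i,j},\Gamma_i,\Delta_i)\in\Lambda^{\mathrm A_{2n-1}}(V,W)$: \[\Delta_kB_{k,k-j+1,k}\Gamma_k=(-1)^j\Delta_{2n-k}B_{2n-k,2n-k+j-1,2n-k}\Gamma_{2n-k},\] \[\Delta_kB_{k,k-j+1,2n-k}\Gamma_{2n-k}=(-1)^{j-1}\Delta_kB_{k,2n-k+j-1,2n-k}\Gamma_{2n-k},\] \[\Delta_{2n-k}B_{2n-k,k-j+1,k}\Gamma_k=(-1)^{j-1}\Delta_{2n-k}B_{2n-k,2n-k+j-1,k}\Gamma_k\] for $1\le j\le k$, and \[\Delta_{2n-k}B_{2n-k,2n-k-j+1,2n-k}\Gamma_{2n-k}=(-1)^j\Delta_kB_{k,k+j-1,k}\Gamma_k\] for $1\le j\le 2n-k$ (all these being scalars, using $W_k=W_{2n-k}$).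
   Context: $B_{i,j}$ ($|i-j|=1$) is a linear map $V_j\to V_i$, $\Gamma_i:W_i\to V_i$, $\Delta_i:V_i\to W_i$. $\Lambda^{\mathrm A_{2n-1}}(V,W)$ is the set of tuples satisfying (with $B_{0,1},B_{1,0},B_{2n,2n-1},B_{2n-1,2n}$ zero): $B_{i,i+1}B_{i+1,i}-B_{i,i-1}B_{i-1,i}=\Gamma_i\Delta_i$ for $1\le i\le n-1$; $-B_{n,n-1}B_{n-1,n}-B_{n,n+1}B_{n+1,n}=\Gamma_n\Delta_n$; $B_{i,i-1}B_{i-1,i}-B_{i,i+1}B_{i+1,i}=\Gamma_i\Delta_i$ for $n+1\le i\le2n-1$. Path notation: $B_{p,q,r}$ denotes the composite $V_r\to V_p$ of the maps $B_{\cdot,\cdot}$ along the path in the line $1,\dots,2n-1$ going from $r$ monotonically to $q$ and then monotonically to $p$ (e.g. $B_{k,k-j+1,2n-k}$ goes from $2n-k$ down to $k-j+1$ and then up to $k$); a path of length zero gives the identity. Nonemptiness condition: with $v_i=\dim V_i$, put $s_1=1-v_1$, $s_i=1-v_i+v_{i-1}$ for $2\le i\le k$, $s_i=-v_i+v_{i-1}$ for $k+1\le i\le n$; then $s_i\in\{-1,0,1\}$ for all $i$ and $|\{i:s_i\ne0\}|\le k$. *)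

From HB Require Import structures.
From mathcomp Require Import all_boot all_order all_algebra.
From mathcomp Require Import reals complex.
Set Implicit Arguments. Unset Strict Implicit. Unset Printing Implicit Defensive.
Import Order.TTheory GRing.Theory Num.Theory.
Local Open Scope ring_scope.

(* Graded spaces: V_i = C^(v i), W_i = C^(w i).  Linear maps are matrices acting
   on column vectors, composition = *m.
   Bup i  : 'M_(v i, v i.+1)  is  B_{i,i+1} : V_{i+1} -> V_i
   Bdn i  : 'M_(v i.+1, v i)  is  B_{i+1,i} : V_i -> V_{i+1}
   Gam i  : 'M_(v i, w i)     is  Gamma_i : W_i -> V_i
   Del i  : 'M_(w i, v i)     is  Delta_i : V_i -> W_i *)
Section Paths.
Variables (C : fieldType) (v : nat -> nat).
Variables (Bup : forall i, 'M[C]_(v i, v i.+1)) (Bdn : forall i, 'M[C]_(v i.+1, v i)).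

Fixpoint goDown (q len : nat) : 'M[C]_(v q, v (len + q)) :=
  match len return 'M[C]_(v q, v (len + q)) with
  | 0 => 1%:M
  | l.+1 => goDown q l *m Bup (l + q)
  end.

Fixpoint goUp (q len : nat) : 'M[C]_(v (len + q), v q) :=
  match len return 'M[C]_(v (len + q), v q) with
  | 0 => 1%:M
  | l.+1 => Bdn (l + q) *m goUp q l
  end.

(* monotone composite V_r -> V_q (identity when r = q); conform_mx only
   transports along the (true) equality of dimensions (r - q) + q = r etc. *)
Definition monoB (q r : nat) : 'M[C]_(v q, v r) :=
  if (q <= r)%N then conform_mx 0 (goDown q (r - q))
  else conform_mx 0 (goUp r (q - r)).

(* B_{p,q,r} : V_r -> V_p, going from r monotonically to q, then monotonically to p *)
Definition pathB (p q r : nat) : 'M[C]_(v p, v r) := monoB p q *m monoB q r.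
End Paths.

Definition LambdaA (C : fieldType) (n : nat) (v w : nat -> nat)
  (Bup : forall i, 'M[C]_(v i, v i.+1)) (Bdn : forall i, 'M[C]_(v i.+1, v i))
  (Gam : forall i, 'M[C]_(v i, w i)) (Del : forall i, 'M[C]_(w i, v i)) : Prop :=
  [/\ Bup 0 = 0, Bdn 0 = 0, Bdn (2 * n).-1 = 0, Bup (2 * n).-1 = 0 &
      (* equation at index i = m.+1, 1 <= i <= 2n-1 :
         B_{i,i+1}B_{i+1,i} = Bup i *m Bdn i ; B_{i,i-1}B_{i-1,i} = Bdn m *m Bup m *)
      forall m, (m.+1 <= (2 * n).-1)%N ->
        ((m.+1 <= n.-1)%N -> Bup m.+1 *m Bdn m.+1 - Bdn m *m Bup m = Gam m.+1 *m Del m.+1) /\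
        (m.+1 = n -> - (Bdn m *m Bup m) - Bup m.+1 *m Bdn m.+1 = Gam m.+1 *m Del m.+1) /\
        ((n.+1 <= m.+1)%N -> Bdn m *m Bup m - Bup m.+1 *m Bdn m.+1 = Gam m.+1 *m Del m.+1)].

Definition s_nonempty (k : nat) (v : nat -> nat) (i : nat) : int :=
  (if (i <= k)%N then 1 else 0) - (v i)%:Z + (if i == 1 then 0 else (v i.-1)%:Z).

Definition nonempty_cond (n k : nat) (v : nat -> nat) : Prop :=
  (forall i, (1 <= i <= n)%N -> s_nonempty k v i \in [:: -1; 0; 1]) /\
  (count (fun i => s_nonempty k v i != 0) (iota 1 n) <= k)%N.

(* the scalar represented by a linear map between one-dimensional spaces W_a, W_b
   (both identified with C^1): the unique entry of X when a = b = 1 *)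
Definition scal (C : fieldType) (a b : nat) (X : 'M[C]_(a, b)) : C :=
  (conform_mx (0 : 'M[C]_1) X) 0 0.

From HB Require Import structures.
From mathcomp Require Import all_boot all_order all_algebra.
From mathcomp Require Import reals complex.
From mathcomp Require Import zify ring.
Set Implicit Arguments. Unset Strict Implicit. Unset Printing Implicit Defensive.
Import Order.TTheory GRing.Theory Num.Theory.
Local Open Scope ring_scope.

(* Put K = 2n - k.  On V_k consider d = B_{k,k-1}B_{k-1,k} and a = B_{k,k+1}B_{k+1,k}, on V_K
   consider a' = B_{K,K+1}B_{K+1,K} and d' = B_{K,K-1}B_{K-1,K}.  The defining relations say
   a = d + Γ_k Δ_k and d' = a' + Γ_K Δ_K, that d and a' are nilpotent (the loops can be pushed
   off the ends of the chain), and, sliding loops along the chain with one sign change at the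
   vertex n, that the monotone paths X : V_k -> V_K and Y : V_K -> V_k satisfy X a = -d' X and
   Y d' = -a Y, that XY and YX are +-(d')^N and +-a^N with N = K - k even, and (Sylvester's
   determinant identity vertex by vertex) that det(1 - t a) = det(1 + t d').
   By the matrix determinant lemma the two sides are 1 - t Δ_k (1 - t d)^-1 Γ_k and
   1 + t Δ_K (1 + t a')^-1 Γ_K, so the scalars Δ_k d^p Γ_k and Δ_K a'^p Γ_K agree up to the
   sign (-1)^(p+1).  The same resolvent calculus, with X and Y carried along, relates the mixed
   scalars, and every path in the statement is a product of powers of these loops with X, Y. *)

Section MonotonePaths.
Variables (C : fieldType) (v : nat -> nat).
Variables (Bup : forall i, 'M[C]_(v i, v i.+1)) (Bdn : forall i, 'M[C]_(v i.+1, v i)).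
Local Notation mB := (monoB Bup Bdn).

Lemma monoB_goDown q l : mB q (l + q) = goDown Bup q l.
Proof. by rewrite /monoB leq_addl addnK conform_mx_id. Qed.

Lemma monoB_goUp r l : (0 < l)%N -> mB (l + r) r = goUp Bdn r l.
Proof.
move=> l_gt0; rewrite /monoB ifF ?addnK ?conform_mx_id //.
by apply/negbTE; rewrite -ltnNge -{1}(add0n r) ltn_add2r.
Qed.

Lemma monoB_id q : mB q q = 1%:M.
Proof. by rewrite /monoB leqnn subnn conform_mx_id. Qed.

Lemma monoB_descS q s : (q <= s)%N -> mB q s.+1 = mB q s *m Bup s.
Proof.
move=> qs; move: (s - q)%N (subnK qs) => l <-.
by transitivity (goDown Bup q l.+1); [exact: (monoB_goDown q l.+1) | rewrite /= monoB_goDown].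
Qed.

Lemma monoB_ascS r s : (r <= s)%N -> mB s.+1 r = Bdn s *m mB s r.
Proof.
move=> rs; move: (s - r)%N (subnK rs) => l <-.
transitivity (goUp Bdn r l.+1); first exact: (monoB_goUp r (ltn0Sn l)).
by case: l => [|l]; rewrite /= ?monoB_id ?mulmx1 ?monoB_goUp.
Qed.

Lemma monoB_desc1 m : mB m m.+1 = Bup m.
Proof. by rewrite monoB_descS // monoB_id mul1mx. Qed.

Lemma monoB_asc1 m : mB m.+1 m = Bdn m.
Proof. by rewrite monoB_ascS // monoB_id mulmx1. Qed.

Lemma monoB_desc_split q r s : (q <= r)%N -> (r <= s)%N -> mB q s = mB q r *m mB r s.
Proof.
move=> qr rs; move: (s - r)%N (subnK rs) => l <-; elim: l => [|l IH].
  by rewrite add0n monoB_id mulmx1.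
by rewrite addSn !monoB_descS ?IH ?mulmxA //; lia.
Qed.

Lemma monoB_asc_split q r s : (s <= r)%N -> (r <= q)%N -> mB q s = mB q r *m mB r s.
Proof.
move=> sr rq; move: (q - r)%N (subnK rq) => l <-; elim: l => [|l IH].
  by rewrite add0n monoB_id mul1mx.
by rewrite addSn !monoB_ascS ?IH ?mulmxA //; lia.
Qed.

End MonotonePaths.

Lemma det_one_sub_mulmxC (R : comPzRingType) m p (A : 'M[R]_(m, p)) (B : 'M[R]_(p, m)) :
  \det (1%:M - A *m B) = \det (1%:M - B *m A).
Proof.
have LU : block_mx 1%:M A B 1%:M = block_mx 1%:M 0 B 1%:M *m block_mx 1%:M A 0 (1%:M - B *m A).
  rewrite mulmx_block !mulmx1 !mul1mx !mulmx0 !mul0mx !addr0.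
  by rewrite addrC subrK.
have UL : block_mx 1%:M A B 1%:M = block_mx (1%:M - A *m B) A 0 1%:M *m block_mx 1%:M 0 B 1%:M.
  by rewrite mulmx_block !mulmx1 !mulmx0 !add0r mul1mx subrK.
have := congr1 determinant LU; rewrite UL !det_mulmx.
by rewrite det_lblock det_ublock det_ublock !det1 !mulr1 !mul1r.
Qed.

Local Notation polymx M := (map_mx (@polyC _) M).

Definition rev_char_poly (C : fieldType) m (M : 'M[C]_m) : {poly C} :=
  \det (1%:M - 'X *: polymx M).

Lemma rev_char_poly_mulmxC (C : fieldType) m p (c : C) (A : 'M[C]_(m, p)) (B : 'M[C]_(p, m)) :
  rev_char_poly (c *: (A *m B)) = rev_char_poly (c *: (B *m A)).
Proof.
rewrite /rev_char_poly scalemxAl map_mxM scalemxAl scalemxAr map_mxM scalemxAr.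
exact: det_one_sub_mulmxC.
Qed.

Definition resolvent (C : fieldType) m (M : 'M[C]_m) q : 'M[{poly C}]_m :=
  \sum_(i < q) 'X ^+ i *: polymx (M ^+ i).

Section Resolvent.
Variables (C : fieldType) (m q : nat) (M : 'M[C]_m).
Hypothesis M_nil : M ^+ q = 0.

Lemma mulmx_resolvent : (1%:M - 'X *: polymx M) *m resolvent M q = 1%:M.
Proof.
rewrite -[RHS]subr0 -(scaler0 _ ('X ^+ q)) -(map_mx0 (@polyC C)) -M_nil.
elim: q => [|p IH]; first by rewrite /resolvent big_ord0 mulmx0 expr0 scale1r map_mx1 subrr.
rewrite /resolvent big_ord_recr /= mulmxDr -/(resolvent M p) IH mulmxBl mul1mx.
rewrite -scalemxAl -scalemxAr scalerA -map_mxM mulmxE -!exprS.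
by rewrite addrA subrK.
Qed.

Lemma resolvent_mulmx : resolvent M q *m (1%:M - 'X *: polymx M) = 1%:M.
Proof.
rewrite -[RHS]subr0 -(scaler0 _ ('X ^+ q)) -(map_mx0 (@polyC C)) -M_nil.
elim: q => [|p IH]; first by rewrite /resolvent big_ord0 mul0mx expr0 scale1r map_mx1 subrr.
rewrite /resolvent big_ord_recr /= mulmxDl -/(resolvent M p) IH mulmxBr mulmx1.
rewrite -scalemxAl -scalemxAr scalerA -map_mxM mulmxE -!exprSr.
by rewrite addrA subrK.
Qed.

Lemma coef_resolvent_entry (L : 'M[C]_(1, m)) (Rt : 'M[C]_(m, 1)) p :
  ((polymx L *m resolvent M q *m polymx Rt) 0 0)`_p = (L *m M ^+ p *m Rt) 0 0.
Proof.
rewrite /resolvent mulmx_sumr mulmx_suml summxE.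
under eq_bigr => i _ do rewrite -scalemxAr -scalemxAl mxE -!map_mxM mxE mulrC mul_polyC.
rewrite -(poly_def q (fun i => (L *m M ^+ i *m Rt) 0 0)) coef_poly; case: ltnP => // qp.
by rewrite -(subnK qp) exprD M_nil mulr0 mulmx0 mul0mx mxE.
Qed.

Lemma rev_char_poly_nilpotent : rev_char_poly M = 1.
Proof.
have : rev_char_poly M \is a GRing.unit.
  apply/unitrP; exists (\det (resolvent M q)).
  by rewrite /rev_char_poly -!det_mulmx mulmx_resolvent resolvent_mulmx det1.
rewrite poly_unitE => /andP[/size_poly1P[c _ Pc] _].
have : (rev_char_poly M).[0] = 1.
  rewrite -horner_evalE /rev_char_poly -det_map_mx -[RHS](det1 _ m); congr (\det _).
  apply/matrixP => i j; rewrite /map_mx !mxE rmorphB rmorph_nat /= horner_evalE.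
  by rewrite !hornerE ?mul0r ?mulr0 ?subr0.
by rewrite Pc hornerC => ->.
Qed.

End Resolvent.

Lemma scalemx_exprN (C : fieldType) m (M : 'M[C]_m) p : (- M) ^+ p = (-1) ^+ p *: M ^+ p.
Proof.
elim: p => [|p IH]; first by rewrite !expr0 scale1r.
by rewrite !exprS IH -!mulmxE -scalemxAr mulNmx scalerN mulN1r scaleNr.
Qed.

Lemma mx11_scalel (C : comPzRingType) r (S : 'M[C]_1) (V : 'M[C]_(1, r)) : S *m V = S 0 0 *: V.
Proof. by rewrite {1}[S]mx11_scalar mul_scalar_mx. Qed.

Lemma mx11_scaler (C : comPzRingType) r (U : 'M[C]_(r, 1)) (S : 'M[C]_1) : U *m S = S 0 0 *: U.
Proof. by rewrite {1}[S]mx11_scalar mul_mx_scalar. Qed.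

Lemma mulmx11_00 (C : comPzRingType) (U V : 'M[C]_1) : (U *m V) 0 0 = U 0 0 * V 0 0.
Proof. by rewrite mx11_scalel mxE. Qed.

Lemma addmx00 (C : pzRingType) p r (M N : 'M[C]_(p.+1, r.+1)) : (M + N) 0 0 = M 0 0 + N 0 0.
Proof. by rewrite mxE. Qed.

Lemma submx00 (C : pzRingType) p r (M N : 'M[C]_(p.+1, r.+1)) : (M - N) 0 0 = M 0 0 - N 0 0.
Proof. by rewrite !mxE. Qed.

Lemma scalemx00 (C : pzRingType) p r (M : 'M[C]_(p.+1, r.+1)) c : (c *: M) 0 0 = c * M 0 0.
Proof. by rewrite mxE. Qed.

Lemma det_one_sub_mx11 (C : comPzRingType) (U : 'M[C]_1) : \det (1%:M - U) = 1 - U 0 0.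
Proof. by rewrite det_mx11 !mxE. Qed.

Lemma one_subX_neq0 (C : fieldType) (f : {poly C}) : 1 - 'X * f != 0.
Proof.
apply/eqP => /(congr1 (coefp 0)) /=.
by rewrite coefB coef1 coefXM /= coef0 subr0 => /eqP; rewrite oner_eq0.
Qed.

Lemma entry_exprS_rank_one (C : fieldType) m (M0 M1 : 'M[C]_m) (G : 'M[C]_(m, 1))
    (D : 'M[C]_(1, m)) r p :
  M1 = M0 + G *m D ->
  (D *m M0 ^+ r *m M1 ^+ p.+1 *m G) 0 0 =
  (D *m M0 ^+ r.+1 *m M1 ^+ p *m G) 0 0 + (D *m M0 ^+ r *m G) 0 0 * (D *m M1 ^+ p *m G) 0 0.
Proof.
move=> M1_def; rewrite exprS -mulmxE {1}M1_def mulmxDl mulmxDr mulmxDl mxE.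
by rewrite exprSr -mulmxE -mulmx11_00 !mulmxA.
Qed.

Section RankOnePerturbations.
Variables (C : fieldType) (m m' q N e : nat).
Variables (d a : 'M[C]_m) (a' d' : 'M[C]_m').
Variables (g : 'M[C]_(m, 1)) (dl : 'M[C]_(1, m)) (g' : 'M[C]_(m', 1)) (dl' : 'M[C]_(1, m')).
Variables (X : 'M[C]_(m', m)) (Y : 'M[C]_(m, m')).
Hypothesis a_def : a = d + g *m dl.
Hypothesis d'_def : d' = a' + g' *m dl'.
Hypothesis d_nil : d ^+ q = 0.
Hypothesis a'_nil : a' ^+ q = 0.
Hypothesis Xa : X *m a = - (d' *m X).
Hypothesis Yd' : Y *m d' = - (a *m Y).
Hypothesis rev_char_poly_a : rev_char_poly a = rev_char_poly (- d').
Hypothesis XY : X *m Y = (-1) ^+ e *: d' ^+ N.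
Hypothesis YX : Y *m X = (-1) ^+ e *: a ^+ N.
Hypothesis N_even : ~~ odd N.

Local Notation t := ('X : {poly C}).
Local Notation Rd := (resolvent d q).
Local Notation Ra' := (resolvent (- a') q).

Let na'_nil : (- a') ^+ q = 0.
Proof. by rewrite exprNn a'_nil mulr0. Qed.

Let one_add_a' : 1%:M + t *: polymx a' = 1%:M - t *: polymx (- a').
Proof. by rewrite map_mxN scalerN opprK. Qed.

Let polymx_a : polymx a = polymx d + polymx g *m polymx dl.
Proof. by rewrite a_def map_mxD map_mxM. Qed.

Let polymx_d' : polymx d' = polymx a' + polymx g' *m polymx dl'.
Proof. by rewrite d'_def map_mxD map_mxM. Qed.

Local Notation f := ((polymx dl *m Rd *m polymx g) 0 0).
Local Notation h := ((polymx dl' *m Ra' *m polymx g') 0 0).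

Lemma rev_char_poly_a_eq : rev_char_poly a = 1 - t * f.
Proof.
rewrite /rev_char_poly.
have -> : 1%:M - t *: polymx a =
    (1%:M - t *: polymx d) *m (1%:M - (t *: (Rd *m polymx g)) *m polymx dl).
  rewrite mulmxBr mulmx1 -scalemxAl -scalemxAr !mulmxA mulmx_resolvent // mul1mx.
  by rewrite polymx_a scalerDr opprD addrA.
rewrite det_mulmx -/(rev_char_poly d) (rev_char_poly_nilpotent d_nil) mul1r.
by rewrite det_one_sub_mulmxC det_one_sub_mx11 -scalemxAr mxE mulmxA.
Qed.

Lemma rev_char_poly_nd'_eq : rev_char_poly (- d') = 1 + t * h.
Proof.
rewrite /rev_char_poly.
have -> : 1%:M - t *: polymx (- d') =
    (1%:M + t *: polymx a') *m (1%:M - (- (t *: (Ra' *m polymx g'))) *m polymx dl').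
  rewrite mulmxBr mulmx1 mulNmx mulmxN opprK -scalemxAl -scalemxAr !mulmxA one_add_a'.
  rewrite mulmx_resolvent // mul1mx -one_add_a' map_mxN scalerN opprK polymx_d'.
  by rewrite scalerDr addrA.
rewrite det_mulmx one_add_a' -/(rev_char_poly (- a')) (rev_char_poly_nilpotent na'_nil) mul1r.
by rewrite det_one_sub_mulmxC det_one_sub_mx11 mulmxN mxE -scalemxAr mxE mulmxA opprK.
Qed.

Lemma f_opp : f = - h.
Proof.
have := rev_char_poly_nd'_eq; rewrite -rev_char_poly_a rev_char_poly_a_eq => /addrI.
by rewrite -mulrN => /(mulfI (negbT (polyX_eq0 C))) <-; rewrite opprK.
Qed.

Let one_add_th : 1 + t * h = 1 - t * f.
Proof. by rewrite f_opp mulrN opprK. Qed.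

Lemma moment_a'_d p : (dl' *m a' ^+ p *m g') 0 0 = (-1) ^+ p.+1 * (dl *m d ^+ p *m g) 0 0.
Proof.
have := congr1 (coefp p) f_opp; rewrite /= coefN !coef_resolvent_entry //.
rewrite scalemx_exprN -scalemxAr -scalemxAl scalemx00 => ->.
by rewrite mulrN mulrA -exprD -signr_odd addSn /= oddD addbb expr1 mulN1r opprK.
Qed.

Lemma moment_a'd'_da p r :
  (dl' *m a' ^+ r *m d' ^+ p *m g') 0 0 = (-1) ^+ (r + p).+1 * (dl *m d ^+ r *m a ^+ p *m g) 0 0.
Proof.
elim: p r => [|p IH] r; first by rewrite !expr0 !mulmx1 addn0 moment_a'_d.
have IH0 := IH 0; rewrite expr0 !mulmx1 in IH0.
rewrite (entry_exprS_rank_one _ _ d'_def) (entry_exprS_rank_one _ _ a_def) IH IH0.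
rewrite moment_a'_d mulrDr addSnnS; congr (_ + _).
by rewrite mulrCA !mulrA -!exprD; congr (_ * _ * _); congr (_ ^+ _); lia.
Qed.

Let Y_shift : polymx Y *m (1%:M + t *: polymx d') = (1%:M - t *: polymx a) *m polymx Y.
Proof.
rewrite mulmxDr mulmx1 -scalemxAr -map_mxM Yd' map_mxN scalerN.
by rewrite mulmxBl mul1mx -scalemxAl -map_mxM.
Qed.

Let X_shift : polymx X *m (1%:M - t *: polymx a) = (1%:M + t *: polymx d') *m polymx X.
Proof.
rewrite mulmxBr mulmx1 -scalemxAr -map_mxM Xa map_mxN scalerN opprK.
by rewrite mulmxDl mul1mx -scalemxAl -map_mxM.
Qed.

Let dl_Rd_shift : polymx dl *m Rd *m (1%:M - t *: polymx a) = (1 - t * f) *: polymx dl.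
Proof.
rewrite polymx_a scalerDr opprD addrA mulmxBr -(mulmxA (polymx dl) Rd (1%:M - _)).
by rewrite resolvent_mulmx // mulmx1 -scalemxAr !mulmxA mx11_scalel scalerA scalerBl scale1r.
Qed.

Let shift_Rd_g : (1%:M - t *: polymx a) *m Rd *m polymx g = (1 - t * f) *: polymx g.
Proof.
rewrite polymx_a scalerDr opprD addrA mulmxBl mulmx_resolvent // mulmxBl mul1mx -!scalemxAl.
rewrite -!mulmxA (mulmxA (polymx dl) Rd) mx11_scaler.
by rewrite scalerA scalerBl scale1r.
Qed.

Let shift_Ra'_g' : (1%:M + t *: polymx d') *m Ra' *m polymx g' = (1 - t * f) *: polymx g'.
Proof.
rewrite polymx_d' scalerDr addrA mulmxDl one_add_a' mulmx_resolvent // mulmxDl mul1mx.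
rewrite -!scalemxAl -![in LHS]mulmxA (mulmxA (polymx dl') Ra') mx11_scaler.
by rewrite scalerA -{1}[polymx g']scale1r -scalerDl one_add_th.
Qed.

Let dl'_Ra'_shift : polymx dl' *m Ra' *m (1%:M + t *: polymx d') = (1 - t * f) *: polymx dl'.
Proof.
rewrite polymx_d' scalerDr addrA mulmxDr one_add_a' -(mulmxA (polymx dl') Ra' (1%:M - _)).
rewrite resolvent_mulmx // mulmx1 -scalemxAr !mulmxA mx11_scalel scalerA.
by rewrite -{1}[polymx dl']scale1r -scalerDl one_add_th.
Qed.

Let entry00_scale_inj (U Z : 'M[{poly C}]_1) :
  (1 - t * f) *: U = (1 - t * f) *: Z -> U 0 0 = Z 0 0.
Proof.
move=> /(congr1 (fun M : 'M[{poly C}]_1 => M 0 0)).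
by rewrite !scalemx00 => /(mulfI (one_subX_neq0 f)).
Qed.

Lemma moment_dY p : (dl *m d ^+ p *m Y *m g') 0 0 = (-1) ^+ p * (dl *m Y *m a' ^+ p *m g') 0 0.
Proof.
have E : (polymx dl *m Rd *m polymx (Y *m g')) 0 0 = (polymx (dl *m Y) *m Ra' *m polymx g') 0 0.
  apply: entry00_scale_inj; rewrite !map_mxM !mulmxA scalemxAr -shift_Ra'_g' !mulmxA.
  by rewrite -(mulmxA (polymx dl *m Rd) (polymx Y)) Y_shift !mulmxA dl_Rd_shift -!scalemxAl.
have := congr1 (coefp p) E; rewrite /= !coef_resolvent_entry // !mulmxA => ->.
by rewrite scalemx_exprN -scalemxAr -scalemxAl scalemx00.
Qed.

Lemma moment_Xd p : (dl' *m X *m d ^+ p *m g) 0 0 = (-1) ^+ p * (dl' *m a' ^+ p *m X *m g) 0 0.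
Proof.
have E : (polymx dl' *m Ra' *m polymx (X *m g)) 0 0 = (polymx (dl' *m X) *m Rd *m polymx g) 0 0.
  apply: entry00_scale_inj; rewrite !map_mxM !mulmxA scalemxAr -shift_Rd_g !mulmxA.
  by rewrite -(mulmxA (polymx dl' *m Ra') (polymx X)) X_shift !mulmxA dl'_Ra'_shift -!scalemxAl.
have := congr1 (coefp p) E; rewrite /= !coef_resolvent_entry // !mulmxA => <-.
by rewrite scalemx_exprN -scalemxAr -!scalemxAl scalemx00.
Qed.

Local Notation u := ((polymx dl *m Rd *m polymx (Y *m g')) 0 0).
Local Notation z := ((polymx dl' *m Ra' *m polymx (X *m g)) 0 0).
Local Notation W := ((polymx (dl' *m X) *m Rd *m polymx (Y *m g')) 0 0).
Local Notation W' := ((polymx (dl *m Y) *m Ra' *m polymx (X *m g)) 0 0).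

Let XY_series : (polymx dl' *m Ra' *m polymx (X *m Y *m g')) 0 0 = (1 - t * f) * W + t * (z * u).
Proof.
have E1 : polymx X *m (1%:M - t *: polymx d) =
    polymx X *m (1%:M - t *: polymx a) + t *: (polymx X *m polymx g *m polymx dl).
  rewrite polymx_a scalerDr opprD addrA (mulmxDr (polymx X) (1%:M - _)) mulmxN -scalemxAr.
  by rewrite mulmxA subrK.
have E2 : polymx (X *m Y *m g') = polymx X *m (1%:M - t *: polymx d) *m Rd *m polymx (Y *m g').
  by rewrite -(mulmxA (polymx X)) mulmx_resolvent // mulmx1 !map_mxM mulmxA.
rewrite E2 E1 X_shift mulmxDl mulmxDl mulmxDr !mulmxA dl'_Ra'_shift addmx00.
congr (_ + _); first by rewrite -!scalemxAl scalemx00 !map_mxM !mulmxA.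
by rewrite -scalemxAr -!scalemxAl scalemx00 -mulmx11_00 !map_mxM !mulmxA.
Qed.

Let YX_series : (polymx dl *m Rd *m polymx (Y *m X *m g)) 0 0 = (1 - t * f) * W' - t * (u * z).
Proof.
have E1 : polymx Y *m (1%:M + t *: polymx a') =
    (1%:M - t *: polymx a) *m polymx Y - t *: (polymx Y *m polymx g' *m polymx dl').
  rewrite -Y_shift polymx_d' scalerDr addrA (mulmxDr (polymx Y) (1%:M + _)) -scalemxAr.
  by rewrite mulmxA addrK.
have E2 : polymx (Y *m X *m g) = polymx Y *m (1%:M + t *: polymx a') *m Ra' *m polymx (X *m g).
  by rewrite -(mulmxA (polymx Y)) one_add_a' mulmx_resolvent // mulmx1 !map_mxM mulmxA.
rewrite E2 E1 mulmxBl mulmxBl mulmxBr !mulmxA dl_Rd_shift submx00.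
congr (_ - _); first by rewrite -!scalemxAl scalemx00 !map_mxM !mulmxA.
by rewrite -scalemxAr -!scalemxAl scalemx00 -mulmx11_00 !map_mxM !mulmxA.
Qed.

(* Coefficientwise this is moment_a'd'_da; the signs cancel because N is even. *)
Let XY_YX_series : (polymx dl' *m Ra' *m polymx (X *m Y *m g')) 0 0 +
  (polymx dl *m Rd *m polymx (Y *m X *m g)) 0 0 = 0.
Proof.
apply/polyP => p; rewrite coefD coef0 !coef_resolvent_entry // XY YX scalemx_exprN.
rewrite -!scalemxAl -!scalemxAr -!scalemxAl !scalemx00 !mulmxA moment_a'd'_da.
have sign : (-1) ^+ p * (-1) ^+ (p + N).+1 = -1 :> C.
  by rewrite -exprD addnS -signr_odd /= !oddD addbA addbb (negbTE N_even) expr1.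
by rewrite (mulrA ((-1) ^+ p)) sign mulN1r mulrN addNr.
Qed.

Lemma moment_XdY p :
  (dl' *m X *m d ^+ p *m Y *m g') 0 0 = (-1) ^+ p.+1 * (dl *m Y *m a' ^+ p *m X *m g) 0 0.
Proof.
have E : W + W' = 0.
  have : (1 - t * f) * (W + W') = 0.
    by rewrite -XY_YX_series XY_series YX_series (mulrC z u); ring.
  by move/eqP; rewrite mulf_eq0 (negbTE (one_subX_neq0 f)) => /eqP.
have := congr1 (coefp p) E; rewrite /= coefD coef0 !coef_resolvent_entry // !mulmxA.
move/eqP; rewrite addr_eq0 => /eqP ->.
by rewrite scalemx_exprN -scalemxAr -!scalemxAl scalemx00 exprS mulN1r mulNr.
Qed.

Theorem rank_one_moments :
  (forall p, (dl *m d ^+ p *m g) 0 0 = (-1) ^+ p.+1 * (dl' *m a' ^+ p *m g') 0 0) /\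
  (forall p, (dl' *m d' ^+ p *m g') 0 0 = (-1) ^+ p.+1 * (dl *m a ^+ p *m g) 0 0) /\
  (forall p, (dl *m d ^+ p *m Y *m g') 0 0 = (-1) ^+ p * (dl *m Y *m a' ^+ p *m g') 0 0) /\
  (forall p, (dl' *m X *m d ^+ p *m g) 0 0 = (-1) ^+ p * (dl' *m a' ^+ p *m X *m g) 0 0) /\
  (forall p, (dl' *m X *m d ^+ p *m Y *m g') 0 0 =
             (-1) ^+ p.+1 * (dl *m Y *m a' ^+ p *m X *m g) 0 0).
Proof.
split=> [p | ]; first by rewrite moment_a'_d mulrA -exprD -signr_odd oddD addbb mul1r.
split=> [p | ]; first by have := moment_a'd'_da p 0; rewrite !expr0 !mulmx1 add0n.
by split; [exact: moment_dY | split; [exact: moment_Xd | exact: moment_XdY]].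
Qed.

End RankOnePerturbations.

Section ChainRelations.
Variables (C : fieldType) (v : nat -> nat).
Variables (Bup : forall i, 'M[C]_(v i, v i.+1)) (Bdn : forall i, 'M[C]_(v i.+1, v i)).
Variables (n k1 K1 : nat).
Hypothesis k_lt_n : (k1.+1 < n)%N.
Hypothesis K_def : (K1 + k1.+2 = 2 * n)%N.
Local Notation mB := (monoB Bup Bdn).
Local Notation A i := (Bup i *m Bdn i).
Local Notation D i := (Bdn i *m Bup i).
Local Notation k := k1.+1.
Local Notation K := K1.+1.
Local Notation T := (K1 + k1.+1)%N.
Hypothesis loop_left : forall m, (m.+1 < k)%N -> A m.+1 = D m.
Hypothesis loop_mid : forall m, (k < m.+1 < K)%N -> D m = (-1) ^+ (m.+1 == n) *: A m.+1.
Hypothesis loop_right : forall m, (K < m.+1 <= T)%N -> D m = A m.+1.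
Hypothesis Bdn0 : Bdn 0 = 0.
Hypothesis BupT : Bup T = 0.

Lemma ascent_to_k_comm m : (m <= k1)%N -> D k1 *m mB k m.+1 = mB k m.+1 *m D m.
Proof.
move=> mk; move: (k1 - m)%N (subnK mk) => l; elim: l m mk => [|l IH] m mk e.
  by rewrite add0n in e; subst m; rewrite monoB_id mul1mx mulmx1.
rewrite [mB k m.+1](monoB_asc_split _ _ (r := m.+2)); try lia.
rewrite monoB_asc1 mulmxA IH; try lia.
by rewrite -!mulmxA loop_left //; lia.
Qed.

Lemma excursion_below_k m : (m <= k1)%N -> mB k m.+1 *m mB m.+1 k = D k1 ^+ (k1 - m).
Proof.
move=> mk; move: (k1 - m)%N (subnK mk) => l; elim: l m mk => [|l IH] m mk e.
  by rewrite add0n in e; subst m; rewrite monoB_id mul1mx expr0.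
rewrite [mB k m.+1](monoB_asc_split _ _ (r := m.+2)); try lia.
rewrite [mB m.+1 k](monoB_desc_split _ _ (r := m.+2)); try lia.
rewrite monoB_asc1 monoB_desc1 -mulmxA (mulmxA (Bdn m.+1)) mulmxA -ascent_to_k_comm; last lia.
by rewrite -mulmxA IH ?exprS ?mulmxE //; lia.
Qed.

Lemma left_loop_nilpotent : D k1 ^+ k = 0.
Proof.
rewrite exprS; have := excursion_below_k (leq0n k1); rewrite subn0 => <-.
by rewrite -mulmxE mulmxA ascent_to_k_comm // Bdn0 mul0mx mulmx0 mul0mx.
Qed.

Lemma descent_to_K_comm s : (K <= s <= T)%N -> A K *m mB K s = mB K s *m A s.
Proof.
move=> /andP[Ks sT]; move: (s - K)%N (subnK Ks) => l; elim: l s Ks sT => [|l IH] s Ks sT e.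
  by rewrite add0n in e; subst s; rewrite monoB_id mul1mx mulmx1.
rewrite addSn in e; subst s.
rewrite monoB_descS; last lia.
rewrite mulmxA IH; try lia.
by rewrite -!mulmxA -loop_right //; lia.
Qed.

Lemma excursion_above_K s : (K <= s <= T)%N -> mB K s *m mB s K = A K ^+ (s - K).
Proof.
move=> /andP[Ks sT]; move: (s - K)%N (subnK Ks) => l; elim: l s Ks sT => [|l IH] s Ks sT e.
  by rewrite add0n in e; subst s; rewrite monoB_id mul1mx expr0.
rewrite addSn in e; subst s.
rewrite (monoB_descS _ _ (s := (l + K)%N)) 1?(monoB_ascS _ _ (s := (l + K)%N)); try lia.
rewrite -mulmxA (mulmxA (Bup _)) mulmxA -descent_to_K_comm; last lia.
by rewrite -mulmxA IH ?exprS ?mulmxE //; lia.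
Qed.

Lemma right_loop_nilpotent : A K ^+ k = 0.
Proof.
have H : mB K T *m mB T K = A K ^+ k1.
  by rewrite excursion_above_K; [congr (_ ^+ _) | ]; lia.
rewrite exprS -H -mulmxE mulmxA descent_to_K_comm; last lia.
by rewrite -mulmxA BupT mul0mx mul0mx mulmx0.
Qed.

Lemma loop_mid_sym m : (k < m.+1 < K)%N -> A m.+1 = (-1) ^+ (m.+1 == n) *: D m.
Proof. by move=> mid; rewrite loop_mid // scalerA -expr2 sqrr_sign scale1r. Qed.

Lemma descent_to_k_comm s : (k <= s <= K1)%N ->
  mB k s.+1 *m D s = (-1) ^+ (n < s.+1) *: (A k *m mB k s.+1).
Proof.
move=> /andP[ks sK]; move: (s - k)%N (subnK ks) => l; elim: l s ks sK => [|l IH] s ks sK e.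
  rewrite add0n in e; subst s; rewrite monoB_desc1 mulmxA (_ : (n < k1.+2)%N = false); last lia.
  by rewrite expr0 scale1r.
rewrite addSn in e; subst s.
rewrite monoB_descS; last lia.
rewrite -mulmxA (mulmxA (Bup _)) loop_mid_sym; last lia.
rewrite -scalemxAl -scalemxAr (mulmxA (mB k _)) IH; try lia.
rewrite -scalemxAl scalerA -exprD -mulmxA monoB_descS; last lia.
by congr (_ ^+ _ *: _); lia.
Qed.

Lemma ascent_to_K_comm m : (k <= m <= K1)%N ->
  mB K m *m A m = (-1) ^+ (m < n) *: (D K1 *m mB K m).
Proof.
move=> /andP[km mK]; move: (K1 - m)%N (subnK mK) => l; elim: l m km mK => [|l IH] m km mK e.
  rewrite add0n in e; subst m; rewrite monoB_asc1 mulmxA (_ : (K1 < n)%N = false); last lia.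
  by rewrite expr0 scale1r.
rewrite [mB K m](monoB_asc_split _ _ (r := m.+1)) ?monoB_asc1; try lia.
rewrite -mulmxA (mulmxA (Bdn m)) loop_mid; last lia.
rewrite -scalemxAl -scalemxAr (mulmxA (mB K _)) IH; try lia.
rewrite -scalemxAl scalerA -exprD -mulmxA.
by congr (_ ^+ _ *: _); lia.
Qed.

Lemma excursion_above_k s : (k <= s <= K)%N ->
  mB k s *m mB s k = (-1) ^+ (s - n) *: A k ^+ (s - k).
Proof.
move=> /andP[ks sK]; move: (s - k)%N (subnK ks) => l; elim: l s ks sK => [|l IH] s ks sK e.
  rewrite add0n in e; subst s; rewrite monoB_id mul1mx (_ : (k1.+1 - n = 0)%N); last lia.
  by rewrite expr0 scale1r.
rewrite addSn in e; subst s.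
rewrite (monoB_descS _ _ (s := (l + k)%N)) 1?(monoB_ascS _ _ (s := (l + k)%N)); try lia.
rewrite -mulmxA (mulmxA (Bup _)) mulmxA.
case: l IH ks sK => [|l] IH ks sK.
  rewrite add0n monoB_id mul1mx mulmx1 (_ : (k1.+2 - n = 0)%N); last lia.
  by rewrite expr0 expr1 scale1r.
rewrite addSn loop_mid_sym; last lia.
rewrite -scalemxAr -scalemxAl descent_to_k_comm; last lia.
rewrite -scalemxAl scalerA -mulmxA -addSn IH; try lia.
rewrite -scalemxAr scalerA mulmxE -exprS -!exprD.
by congr (_ ^+ _ *: _); lia.
Qed.

Lemma excursion_below_K m : (k <= m <= K)%N ->
  mB K m *m mB m K = (-1) ^+ (n - m) *: D K1 ^+ (K - m).
Proof.
move=> /andP[km mK]; move: (K - m)%N (subnK mK) => l; elim: l m km mK => [|l IH] m km mK e.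
  rewrite add0n in e; subst m; rewrite monoB_id mul1mx (_ : (n - K1.+1 = 0)%N); last lia.
  by rewrite expr0 scale1r.
rewrite [mB K m](monoB_asc_split _ _ (r := m.+1)) 1?[mB m K](monoB_desc_split _ _ (r := m.+1));
  try lia.
rewrite monoB_asc1 monoB_desc1 -mulmxA (mulmxA (Bdn m)) mulmxA.
case: l IH e km mK => [|l] IH e km mK.
  have -> : m = K1 by lia.
  rewrite monoB_id mul1mx mulmx1 (_ : (n - K1 = 0)%N); last lia.
  by rewrite expr0 expr1 scale1r.
rewrite loop_mid; last lia.
rewrite -scalemxAr -scalemxAl -(mulmxA (mB K _)) (mulmxA (mB K _)) ascent_to_K_comm; last lia.
rewrite -scalemxAl scalerA -mulmxA IH; try lia.
rewrite -scalemxAr scalerA mulmxE -exprS -!exprD.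
by congr (_ ^+ _ *: _); lia.
Qed.

Lemma rev_char_poly_middle s : (k <= s <= K1)%N ->
  rev_char_poly (A k) = rev_char_poly ((-1) ^+ (n < s.+1) *: D s).
Proof.
move=> /andP[ks sK]; move: (s - k)%N (subnK ks) => l; elim: l s ks sK => [|l IH] s ks sK e.
  rewrite add0n in e; subst s; rewrite (_ : (n < k1.+2)%N = false); last lia.
  by rewrite -rev_char_poly_mulmxC !scale1r.
rewrite addSn in e; subst s.
rewrite (IH (l + k)%N) 1?loop_mid; try lia.
rewrite scalerA -exprD rev_char_poly_mulmxC.
by rewrite (_ : ((n < (l + k).+1) + ((l + k).+1 == n))%N = (n < (l + k).+2)%N) //; lia.
Qed.

Variables (g : 'M[C]_(v k, 1)) (dl : 'M[C]_(1, v k)) (g' : 'M[C]_(v K, 1)) (dl' : 'M[C]_(1, v K)).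
Hypothesis frame_k : A k - D k1 = g *m dl.
Hypothesis frame_K : D K1 - A K = g' *m dl'.

Local Notation X := (mB K k).
Local Notation Y := (mB k K).

Lemma loop_moments :
  (forall p, (dl *m D k1 ^+ p *m g) 0 0 = (-1) ^+ p.+1 * (dl' *m A K ^+ p *m g') 0 0) /\
  (forall p, (dl' *m D K1 ^+ p *m g') 0 0 = (-1) ^+ p.+1 * (dl *m A k ^+ p *m g) 0 0) /\
  (forall p, (dl *m D k1 ^+ p *m Y *m g') 0 0 = (-1) ^+ p * (dl *m Y *m A K ^+ p *m g') 0 0) /\
  (forall p, (dl' *m X *m D k1 ^+ p *m g) 0 0 = (-1) ^+ p * (dl' *m A K ^+ p *m X *m g) 0 0) /\
  (forall p, (dl' *m X *m D k1 ^+ p *m Y *m g') 0 0 =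
             (-1) ^+ p.+1 * (dl *m Y *m A K ^+ p *m X *m g) 0 0).
Proof.
have K_gt_n : (n < K)%N by lia.
apply: (rank_one_moments (q := k) (N := (K1 - k1)%N) (e := (n - k)%N)).
- by rewrite -frame_k addrC subrK.
- by rewrite -frame_K addrC subrK.
- exact: left_loop_nilpotent.
- exact: right_loop_nilpotent.
- by rewrite ascent_to_K_comm ?k_lt_n ?expr1 ?scaleN1r //; lia.
- by rewrite descent_to_k_comm ?K_gt_n ?expr1 ?scaleN1r //; lia.
- by rewrite (rev_char_poly_middle (s := K1)) ?K_gt_n ?expr1 ?scaleN1r //; lia.
- by rewrite excursion_below_K ?subSS //; lia.
- rewrite excursion_above_k ?subSS; last lia.
  by rewrite (_ : (K1.+1 - n = n - k1.+1)%N) //; lia.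
- by rewrite (_ : (K1 - k1 = 2 * (n - k1.+1))%N) ?oddM //; lia.
Qed.

Lemma path_scalars_k j : (1 <= j <= k)%N ->
  [/\ (dl *m pathB Bup Bdn k (k - j + 1) k *m g) 0 0
       = (-1) ^+ j * (dl' *m pathB Bup Bdn K (K + j - 1) K *m g') 0 0,
       (dl *m pathB Bup Bdn k (k - j + 1) K *m g') 0 0
       = (-1) ^+ (j - 1) * (dl *m pathB Bup Bdn k (K + j - 1) K *m g') 0 0
     & (dl' *m pathB Bup Bdn K (k - j + 1) k *m g) 0 0
       = (-1) ^+ (j - 1) * (dl' *m pathB Bup Bdn K (K + j - 1) k *m g) 0 0].
Proof.
case: j => [|p] // /andP[_ pk].
have [M1 [_ [M3 [M4 _]]]] := loop_moments.
rewrite (_ : (k - p.+1 + 1 = (k1 - p).+1)%N); last lia.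
rewrite (_ : (K + p.+1 - 1 = K + p)%N) ?subn1 /=; last lia.
have below : mB k (k1 - p).+1 *m mB (k1 - p).+1 k = D k1 ^+ p.
  by rewrite excursion_below_k; [congr (_ ^+ _) | ]; lia.
have above : mB K (K + p) *m mB (K + p) K = A K ^+ p.
  by rewrite excursion_above_K; [congr (_ ^+ _) | ]; lia.
rewrite /pathB; split.
- by rewrite below above M1.
- rewrite [mB (k1 - p).+1 K](monoB_desc_split _ _ (r := k)); try lia.
  rewrite [mB k (K + p)](monoB_desc_split _ _ (r := K)); try lia.
  by rewrite !mulmxA -(mulmxA dl) below -(mulmxA (dl *m Y)) above M3.
- rewrite [mB K (k1 - p).+1](monoB_asc_split _ _ (r := k)); try lia.
  rewrite [mB (K + p) k](monoB_asc_split _ _ (r := K)); try lia.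
  by rewrite !mulmxA -(mulmxA (dl' *m X)) below -(mulmxA dl' (mB K (K + p))) above M4.
Qed.

Lemma path_scalars_K j : (1 <= j <= K)%N ->
  (dl' *m pathB Bup Bdn K (K - j + 1) K *m g') 0 0
  = (-1) ^+ j * (dl *m pathB Bup Bdn k (k + j - 1) k *m g) 0 0.
Proof.
case: j => [|p] // /andP[_ pK].
have [_ [M2 [_ [_ M5]]]] := loop_moments.
rewrite (_ : (K - p.+1 + 1 = K - p)%N); last lia.
rewrite (_ : (k + p.+1 - 1 = k + p)%N) /pathB; last lia.
have [pN | Np] := leqP p (K1 - k1).
  rewrite excursion_below_K; last lia.
  rewrite excursion_above_k; last lia.
  rewrite (_ : (K - (K - p) = p)%N); last lia.
  rewrite (_ : (k + p - k = p)%N); last lia.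
  rewrite (_ : (n - (K - p) = k + p - n)%N); last lia.
  by rewrite -!scalemxAr -!scalemxAl !scalemx00 M2 mulrCA.
rewrite (_ : (K - p = (K1 - p).+1)%N); last lia.
rewrite [mB K (K1 - p).+1](monoB_asc_split _ _ (r := k)); try lia.
rewrite [mB (K1 - p).+1 K](monoB_desc_split _ _ (r := k)); try lia.
rewrite [mB k (k + p)](monoB_desc_split _ _ (r := K)); try lia.
rewrite [mB (k + p) k](monoB_asc_split _ _ (r := K)); try lia.
rewrite !mulmxA -(mulmxA (dl' *m X)) excursion_below_k; last lia.
rewrite -(mulmxA (dl *m Y)) excursion_above_K; last lia.
rewrite (_ : (k1 - (K1 - p) = p - (K1 - k1))%N); last lia.
rewrite (_ : (k + p - K = p - (K1 - k1))%N); last lia.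
rewrite M5 [in RHS](_ : p.+1 = (p - (K1 - k1)).+1 + (K1 - k1))%N; last lia.
rewrite exprD -[(-1) ^+ (K1 - k1)]signr_odd (_ : (K1 - k1 = 2 * (n - k))%N); last lia.
by rewrite oddM mulr1.
Qed.

End ChainRelations.

Lemma mulmx_dim0 (C : pzRingType) m r p (A : 'M[C]_(m, r)) (B : 'M[C]_(r, p)) :
  r = 0%N -> A *m B = 0.
Proof. by move=> r0; move: A B; rewrite r0 => A B; rewrite thinmx0 mul0mx. Qed.

Lemma LambdaA_chain_relations (C : fieldType) (n k1 K1 : nat) (v w : nat -> nat)
    (Bup : forall i, 'M[C]_(v i, v i.+1)) (Bdn : forall i, 'M[C]_(v i.+1, v i))
    (Gam : forall i, 'M[C]_(v i, w i)) (Del : forall i, 'M[C]_(w i, v i)) :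
  (k1.+1 < n)%N -> (K1 + k1.+2 = 2 * n)%N ->
  (forall i, i != k1.+1 -> i != K1.+1 -> w i = 0%N) ->
  LambdaA n Bup Bdn Gam Del ->
  [/\ forall m, (m.+1 < k1.+1)%N -> Bup m.+1 *m Bdn m.+1 = Bdn m *m Bup m,
      forall m, (k1.+1 < m.+1 < K1.+1)%N ->
        Bdn m *m Bup m = (-1) ^+ (m.+1 == n) *: (Bup m.+1 *m Bdn m.+1),
      forall m, (K1.+1 < m.+1 <= K1 + k1.+1)%N -> Bdn m *m Bup m = Bup m.+1 *m Bdn m.+1,
      Bup k1.+1 *m Bdn k1.+1 - Bdn k1 *m Bup k1 = Gam k1.+1 *m Del k1.+1 &
      Bdn K1 *m Bup K1 - Bup K1.+1 *m Bdn K1.+1 = Gam K1.+1 *m Del K1.+1].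
Proof.
move=> k_lt_n K_def w_out [_ _ _ _ rel].
have rank0 i : i != k1.+1 -> i != K1.+1 -> Gam i *m Del i = 0.
  by move=> ik iK; apply: mulmx_dim0; apply: w_out.
split=> [m mk | m /andP[km mK] | m /andP[Km mT] | | ].
- have [before_n _] := rel m ltac:(lia).
  have r0 : Gam m.+1 *m Del m.+1 = 0 by apply: rank0; apply/eqP; lia.
  by apply/eqP; rewrite -subr_eq0 -r0 before_n //; lia.
- have [before_n [at_n after_n]] := rel m ltac:(lia).
  have r0 : Gam m.+1 *m Del m.+1 = 0 by apply: rank0; apply/eqP; lia.
  case: (ltngtP m.+1 n) => mn; rewrite ?expr0 ?expr1 ?scale1r ?scaleN1r.
  + by apply/esym/eqP; rewrite -subr_eq0 -r0 before_n //; lia.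
  + by apply/eqP; rewrite -subr_eq0 -r0 after_n //; lia.
  + by apply/eqP; rewrite -subr_eq0 opprK -oppr_eq0 opprD -r0 at_n.
- have [_ [_ after_n]] := rel m ltac:(lia).
  have r0 : Gam m.+1 *m Del m.+1 = 0 by apply: rank0; apply/eqP; lia.
  by apply/eqP; rewrite -subr_eq0 -r0 after_n //; lia.
- by have [before_n _] := rel k1 ltac:(lia); apply: before_n; lia.
- by have [_ [_ after_n]] := rel K1 ltac:(lia); apply: after_n; lia.
Qed.

Unset Implicit Arguments.
Theorem lemma4p14 (R : realType) (n k : nat) (v w : nat -> nat)
  (Bup : forall i, 'M[R[i]]_(v i, v i.+1)) (Bdn : forall i, 'M[R[i]]_(v i.+1, v i))
  (Gam : forall i, 'M[R[i]]_(v i, w i)) (Del : forall i, 'M[R[i]]_(w i, v i)) :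
  (1 <= k)%N -> (k < n)%N ->
  (forall i, (1 <= i <= (2 * n).-1)%N -> v i = v (2 * n - i)%N) ->
  (forall i, i != k -> i != (2 * n - k)%N -> w i = 0%N) ->
  w k = 1%N -> w (2 * n - k)%N = 1%N ->
  nonempty_cond n k v ->
  LambdaA n Bup Bdn Gam Del ->
  (forall j, (1 <= j <= k)%N ->
     [/\ scal (Del k *m pathB Bup Bdn k (k - j + 1) k *m Gam k)
         = (-1) ^+ j * scal (Del (2 * n - k)%N *m
              pathB Bup Bdn (2 * n - k) (2 * n - k + j - 1) (2 * n - k) *m Gam (2 * n - k)%N),
         scal (Del k *m pathB Bup Bdn k (k - j + 1) (2 * n - k) *m Gam (2 * n - k)%N)
         = (-1) ^+ (j - 1) * scal (Del k *m
              pathB Bup Bdn k (2 * n - k + j - 1) (2 * n - k) *m Gam (2 * n - k)%N)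
       & scal (Del (2 * n - k)%N *m pathB Bup Bdn (2 * n - k) (k - j + 1) k *m Gam k)
         = (-1) ^+ (j - 1) * scal (Del (2 * n - k)%N *m
              pathB Bup Bdn (2 * n - k) (2 * n - k + j - 1) k *m Gam k)]) /\
  (forall j, (1 <= j <= 2 * n - k)%N ->
     scal (Del (2 * n - k)%N *m pathB Bup Bdn (2 * n - k) (2 * n - k - j + 1) (2 * n - k)
           *m Gam (2 * n - k)%N)
     = (-1) ^+ j * scal (Del k *m pathB Bup Bdn k (k + j - 1) k *m Gam k)).
Proof.
move=> k_gt0 k_lt_n _ w_out wk wK _ HL.
case: k k_gt0 k_lt_n w_out wk wK => [//|k1] _ k_lt_n w_out wk wK.
pose K1 := (2 * n - k1.+1).-1.
have K_succ : (2 * n - k1.+1 = K1.+1)%N by rewrite /K1; lia.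
have K_def : (K1 + k1.+2 = 2 * n)%N by rewrite /K1; lia.
rewrite K_succ in w_out wK *.
have [_ Bdn0 _ BupT _] := HL.
rewrite (_ : (2 * n).-1 = K1 + k1.+1)%N in BupT; last lia.
have [loopL loopM loopR frame_k frame_K] := LambdaA_chain_relations k_lt_n K_def w_out HL.
move: (Gam k1.+1) (Del k1.+1) (Gam K1.+1) (Del K1.+1) frame_k frame_K.
rewrite wk wK => g dl g' dl' frame_k frame_K.
rewrite /scal; split=> j j_range; rewrite !conform_mx_id.
  exact: (path_scalars_k k_lt_n K_def loopL loopM loopR Bdn0 BupT frame_k frame_K).
exact: (path_scalars_K k_lt_n K_def loopL loopM loopR Bdn0 BupT frame_k frame_K).
Qed.
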